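(* Let $\psi:[0,1]\to[0,1]$ be an increasing, differentiable, convex function. If $\psi(e^{-r/e})+\psi(re^{-r/e})\ge1$ for all $r\in[0,1]$, then $\psi(e^{-r/e})+\psi(re^{-r/e})\ge1$ for all $r\in[0,e]$. *)

From Stdlib Require Import Reals Lra.
Open Scope R_scope.

Definition in01 (x : R) : Prop := 0 <= x <= 1.

Definition maps01 (psi : R -> R) : Prop :=
  forall x, in01 x -> in01 (psi x).

Definition increasing_on01 (psi : R -> R) : Prop :=
  forall x y, in01 x -> in01 y -> x <= y -> psi x <= psi y.

Definition convex_on01 (psi : R -> R) : Prop :=
  forall x y t, in01 x -> in01 y -> 0 <= t <= 1 ->
    psi (t * x + (1 - t) * y) <= t * psi x + (1 - t) * psi y.

Definition differentiable_on01 (psi : R -> R) : Prop :=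
  forall x, in01 x -> exists l : R,
    limit1_in (fun y => (psi y - psi x) / (y - x))
              (fun y => in01 y /\ y <> x) l x.

(* For [1 < r <= e] write [r = exp u] with [u] in [0,1] and put [s = r - e u].
   Then [exp (-s/e) = r exp (-r/e)], so the hypothesis at [s] reads
   [psi (r exp (-r/e)) + psi (s r exp (-r/e)) >= 1].  Convexity of [exp] gives
   [0 <= s <= 1 - u] and hence [s r <= 1], so by monotonicity the second term is
   at most [psi (exp (-r/e))]. *)
From Stdlib Require Import Reals Lra Psatz.
Open Scope R_scope.

Lemma exp_le_exp (x y : R) : x <= y -> exp x <= exp y.
Proof.
  intros [Hlt | ->]; [apply Rlt_le, exp_increasing, Hlt | apply Rle_refl].
Qed.

Lemma exp_le_exp_inv (x y : R) : exp x <= exp y -> x <= y.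
Proof.
  intros Hle. destruct (Rle_lt_dec x y) as [Hxy | Hyx]; [exact Hxy |].
  pose proof (exp_increasing _ _ Hyx). lra.
Qed.

Lemma exp_inv_r (x : R) : exp x * exp (- x) = 1.
Proof. rewrite <- exp_plus, Rplus_opp_r. apply exp_0. Qed.

Lemma exp_ge_tangent_1 (x : R) : exp 1 * x <= exp x.
Proof.
  replace (exp x) with (exp 1 * exp (x - 1))
    by (rewrite <- exp_plus; f_equal; ring).
  pose proof (exp_ineq1_le (x - 1)). pose proof (exp_pos 1). nra.
Qed.

Lemma exp_mul_one_sub_le_1 (x : R) : exp x * (1 - x) <= 1.
Proof.
  pose proof (exp_ineq1_le (- x)). pose proof (exp_pos x). pose proof (exp_inv_r x).
  nra.
Qed.

Lemma exp_mul_two_sub_le_e (x : R) : exp x * (2 - x) <= exp 1.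
Proof.
  assert (Hsplit : exp x * exp (1 - x) = exp 1)
    by (rewrite <- exp_plus; f_equal; ring).
  pose proof (exp_ineq1_le (1 - x)). pose proof (exp_pos x). nra.
Qed.

(* The chord of [exp] over [0,1]; the weights [(1-u)^2 + u(2-u) = 1] reduce it
   to the two tangent-type bounds above. *)
Lemma exp_le_chord01 (u : R) : 0 <= u <= 1 -> exp u <= (1 - u) + u * exp 1.
Proof.
  intros Hu.
  replace (exp u) with (exp u * (1 - u) * (1 - u) + exp u * (2 - u) * u) by ring.
  pose proof (exp_mul_one_sub_le_1 u). pose proof (exp_mul_two_sub_le_e u). nra.
Qed.

Lemma exp_sub_tangent_in01 (u : R) :
  0 <= u <= 1 -> 0 <= exp u - exp 1 * u <= 1 - u.
Proof.
  intros Hu. pose proof (exp_ge_tangent_1 u). pose proof (exp_le_chord01 u Hu). lra.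
Qed.

Lemma exp_sub_tangent_mul_le_1 (u : R) :
  0 <= u <= 1 -> (exp u - exp 1 * u) * exp u <= 1.
Proof.
  intros Hu. pose proof (exp_sub_tangent_in01 u Hu).
  pose proof (exp_mul_one_sub_le_1 u). pose proof (exp_pos u). nra.
Qed.

Lemma exp_neg_div_e_shift (r u : R) :
  exp (- (r - exp 1 * u) / exp 1) = exp u * exp (- r / exp 1).
Proof.
  pose proof (exp_pos 1).
  rewrite <- exp_plus. f_equal. field. lra.
Qed.

Lemma exp_neg_div_e_in01 (r : R) : 0 <= r -> in01 (exp (- r / exp 1)).
Proof.
  intros Hr. pose proof (exp_pos 1).
  split; [apply Rlt_le, exp_pos |].
  rewrite <- exp_0 at 2. apply exp_le_exp.
  assert (0 < / exp 1) by (apply Rinv_0_lt_compat; lra).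
  unfold Rdiv. nra.
Qed.

Theorem lemma5p4 (psi : R -> R)
  (Hmap : maps01 psi)
  (Hinc : increasing_on01 psi)
  (Hdiff : differentiable_on01 psi)
  (Hconv : convex_on01 psi)
  (H01 : forall r, 0 <= r <= 1 ->
           psi (exp (- r / exp 1)) + psi (r * exp (- r / exp 1)) >= 1) :
  forall r, 0 <= r <= exp 1 ->
    psi (exp (- r / exp 1)) + psi (r * exp (- r / exp 1)) >= 1.
Proof.
  intros r [Hr0 Hre].
  destruct (Rle_lt_dec r 1) as [Hr1 | Hr1]; [apply H01; lra |].
  destruct (ln_exists1 r (Rlt_le _ _ Hr1)) as [u ->].
  assert (Hu : 0 <= u <= 1).
  { split; apply exp_le_exp_inv; [rewrite exp_0; lra | exact Hre]. }
  pose proof (exp_sub_tangent_in01 u Hu) as Hs.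
  pose proof (exp_sub_tangent_mul_le_1 u Hu) as Hsr.
  pose proof (exp_neg_div_e_in01 (exp u) (Rlt_le _ _ (exp_pos u))) as Hy.
  set (y := exp (- exp u / exp 1)) in *.
  set (s := exp u - exp 1 * u) in *.
  assert (Hshift : exp (- s / exp 1) = exp u * y) by apply exp_neg_div_e_shift.
  pose proof (H01 s ltac:(lra)) as Hs_ineq. rewrite Hshift in Hs_ineq.
  assert (Hdom : psi (s * (exp u * y)) <= psi y).
  { pose proof (exp_pos u). destruct Hy.
    assert (0 <= exp u * y) by nra.
    apply Hinc; unfold in01; nra. }
  lra.
Qed.
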